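(* Let $A$ be a vector bundle over $M$, $P\in\Gamma(A^\vee\otimes A)$ any $(1,1)$-form, and $X$ a vector field of degree $b-1$ on $A[1]$. Then the map $\Phi(X):\Gamma(A)^{\times b}\to\Gamma(A)$, $\Phi(X)(E_1,\dots,E_b)=\sum_{k=0}^b\sum_{1\le i_1<\dots<i_k\le b}(-1)^{b-k}P^{b-k}B_X(E_1,\dots,PE_{i_1},\dots,PE_{i_k},\dots,E_b)$ ($P$ applied exactly in positions $i_1,\dots,i_k$) is alternating and $C^\infty(M)$-multilinear, i.e. $\Phi(X)\in\Gamma(\wedge^bA^\vee\otimes A)$.
   Context: $A[1]$ is the graded manifold with function algebra $\Gamma(\wedge^\bullet A^\vee)$; a vector field of degree $d$ on $A[1]$ is a graded derivation of degree $d$ of $\Gamma(\wedge^\bullet A^\vee)$. For $X$ of degree $b-1$, $a_X:C^\infty(M)\to\Gamma(\wedge^{b-1}A^\vee)$ and $\partial_X:\Gamma(A^\vee)\to\Gamma(\wedge^bA^\vee)$ are the restrictions of $X$. With $\langle\eta,X_1\wedge\cdots\wedge X_p\rangle=\eta(X_1,\dots,X_p)$, $B_X:\Gamma(A)^{\times b}\to\Gamma(A)$ is defined by $\langle W,B_X(E_1,\dots,E_b)\rangle=(-1)^{b-1}\big(\langle\partial_XW,E_1\wedge\cdots\wedge E_b\rangle-\sum_{i=1}^b(-1)^{b-i}\langle a_X\langle W,E_i\rangle,E_1\wedge\cdots\wedge\widehat{E_i}\wedge\cdots\wedge E_b\rangle\big)$ for all $W\in\Gamma(A^\vee)$. $P$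 is viewed as a $C^\infty(M)$-linear endomorphism of $\Gamma(A)$. *)

(* Algebraic model of the setting:
   R  ~ C^oo(M)  (a commutative ring),
   V  ~ Gamma(A) (an R-module),
   a p-form (element of Gamma(wedge^p A^vee)) is an R-multilinear alternating
   map V^p -> R, encoded as a function  f : seq V -> R  vanishing on sequences
   of length <> p.  The function algebra of A[1] is the direct sum of these. *)
From HB Require Import structures.
From mathcomp Require Import all_boot all_order all_algebra.
Set Implicit Arguments. Unset Strict Implicit. Unset Printing Implicit Defensive.
Import Order.TTheory GRing.Theory.
Local Open Scope ring_scope.

Section Forms.
Variables (R : comNzRingType) (V : lmodType R).

Definition fn := seq V -> R.

(* homogeneous of (integer) degree p: vanishes off sequences of length p;
   for p < 0 this forces f = 0 *)
Definition homog (p : int) (f : fn) : Prop :=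
  forall s : seq V, (size s)%:Z != p -> f s = 0.

Definition multilinear (f : fn) : Prop :=
  forall (s : seq V) (i : nat) (a : R) (u v : V), (i < size s)%N ->
    f (set_nth 0 s i (a *: u + v)) = a * f (set_nth 0 s i u) + f (set_nth 0 s i v).

Definition alternating (f : fn) : Prop :=
  forall (s : seq V) (i j : nat), (i < j)%N -> (j < size s)%N ->
    nth 0 s i = nth 0 s j -> f s = 0.

Definition is_form (p : int) (f : fn) : Prop :=
  [/\ homog p f, multilinear f & alternating f].

(* sign of the shuffle selecting the positions in S first *)
Definition shuffle_sign n (S : {set 'I_n}) : R :=
  (-1) ^+ #|[set ij : 'I_n * 'I_n | (ij.1 \in S) && (ij.2 \notin S) && (ij.2 < ij.1)%N]|.

Definition wedge (f g : fn) : fn := fun s =>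
  \sum_(S : {set 'I_(size s)})
     shuffle_sign S * f (mask [seq i \in S | i <- enum 'I_(size s)] s)
                    * g (mask [seq i \notin S | i <- enum 'I_(size s)] s).

Definition const0 (c : R) : fn := fun s => if s is [::] then c else 0.

(* D : vector field of degree b-1 on A[1], i.e. a graded derivation of degree
   b-1 of Gamma(wedge^. A^vee) (given on homogeneous elements). *)
Definition is_vector_field (b : nat) (D : fn -> fn) : Prop :=
  [/\ (forall (p : nat) f, is_form p%:Z f -> is_form (p%:Z + (b%:Z - 1)) (D f)),
      (forall (p : nat) f g, is_form p%:Z f -> is_form p%:Z g ->
          forall s, D (fun t => f t + g t) s = D f s + D g s) &
      (forall (p q : nat) f g, is_form p%:Z f -> is_form q%:Z g ->
          forall s, D (wedge f g) s
            = wedge (D f) g s + (-1) ^+ (b.+1 * p) * wedge f (D g) s)].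
      (* (-1)^((b-1)p) = (-1)^((b+1)p) *)

Definition aX (D : fn -> fn) (c : R) : fn := D (const0 c).
Definition dX (D : fn -> fn) (W : fn) : fn := D W.

Definition tup b (E : 'I_b -> V) : seq V := [seq E i | i <- enum 'I_b].
Definition tup_del b (E : 'I_b -> V) (i : 'I_b) : seq V :=
  [seq E j | j <- enum 'I_b & j != i].

(* B is B_X: defined by its pairings with all W in Gamma(A^vee) *)
Definition is_BX (b : nat) (D : fn -> fn) (B : ('I_b -> V) -> V) : Prop :=
  forall (W : fn), is_form 1 W -> forall E : 'I_b -> V,
    W [:: B E] = (-1) ^+ b.+1 *
      (dX D W (tup E)
       - \sum_(i < b) (-1) ^+ (b - i.+1) * aX D (W [:: E i]) (tup_del E i)).

(* sections of A are separated by sections of A^vee (true for vector bundles) *)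
Definition dual_separates : Prop :=
  forall v : V, (forall W : fn, is_form 1 W -> W [:: v] = 0) -> v = 0.

Definition upd b (E : 'I_b -> V) (i : 'I_b) (x : V) : 'I_b -> V :=
  fun j => if j == i then x else E j.

Definition Phi (b : nat) (P : V -> V) (B : ('I_b -> V) -> V) (E : 'I_b -> V) : V :=
  \sum_(S : {set 'I_b})
     (-1) ^+ (b - #|S|) *: iter (b - #|S|) P (B (fun i => if i \in S then P (E i) else E i)).

Definition vmultilinear b (T : ('I_b -> V) -> V) : Prop :=
  forall E i (a : R) u v, T (upd E i (a *: u + v)) = a *: T (upd E i u) + T (upd E i v).
Definition valternating b (T : ('I_b -> V) -> V) : Prop :=
  forall E (i j : 'I_b), i != j -> E i = E j -> T E = 0.

End Forms.

(* B_X is alternating and additive in each argument, but not C^oo(M)-linear: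
   since a_X is a derivation, replacing E_i by a E_i yields a B_X(E) plus a
   defect c E_i, where the scalar c (a multiple of a_X a evaluated on the other
   arguments) does not depend on E_i.  In Phi(X) the summands for a set S of
   positions with i ∉ S and for S ∪ {i} then carry the defects
   c P^(b-|S|) E_i and -c P^(b-|S|-1) (P E_i), which cancel.  Alternation
   survives because exchanging two equal arguments exchanges the summands of
   S and of its image under the transposition, with opposite signs.  All
   properties of B_X are checked after pairing with 1-forms, which separate
   sections; they reduce to those of the forms d_X W and a_X f. *)

From mathcomp Require Import all_boot all_order all_algebra all_fingroup.
From mathcomp Require Import ring zify.
From Stdlib Require Import FunctionalExtensionality.
Set Implicit Arguments. Unset Strict Implicit. Unset Printing Implicit Defensive.
Import Order.TTheory GRing.Theory.
Local Open Scope ring_scope.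

Lemma sumr_involution_eq0 (M : zmodType) (I : finType) (p : pred I)
    (sigma : I -> I) (t : I -> M) :
  involutive sigma ->
  (forall x, p x -> ~~ p (sigma x) /\ t (sigma x) = - t x) ->
  (forall x, ~~ p x -> ~~ p (sigma x) -> t x = 0) ->
  \sum_x t x = 0.
Proof.
move=> sigmaK flip unpaired0.
rewrite (bigID p) [\sum_(x | ~~ p x) _](bigID (p \o sigma)) /=.
rewrite [\sum_(x | ~~ p x && ~~ p (sigma x)) _]big1 => [|x /andP [] /unpaired0 //].
rewrite addr0 [\sum_(x | ~~ p x && p (sigma x)) _](reindex_inj (inv_inj sigmaK)).
rewrite /= (eq_bigl p) => [|x].
  by rewrite -big_split big1 // => x /flip [_ ->] /=; rewrite addrN.
rewrite /= sigmaK andbC; case px: (p x) => //=.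
by have [-> _] := flip x px.
Qed.

Lemma uniq_split2 (T : eqType) (L : seq T) i j : uniq L -> i \in L -> j \in L ->
  (index i L < index j L)%N ->
  exists L1 L2 L3, L = L1 ++ i :: L2 ++ j :: L3 /\
     size L2 = (index j L - (index i L).+1)%N.
Proof.
move=> uL iL; case/splitPr: iL uL => L1 R1 uL jL lt.
have := uL; rewrite cat_uniq /= => /and3P [_ /norP [iL1 _] /andP [iR1 uR1]].
have jL1 : j \notin L1.
  apply/negP => jL1; move: lt; rewrite !index_cat jL1 (negbTE iL1) /= eqxx.
  by rewrite addn0 ltnNge ltnW // index_mem.
have ji : i != j by apply: contraTneq lt => ->; rewrite ltnn.
have jR1 : j \in R1.
  by move: jL; rewrite mem_cat (negbTE jL1) /= inE eq_sym (negbTE ji).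
rewrite !index_cat (negbTE jL1) (negbTE iL1) /= eqxx (negbTE ji) addn0.
move: uR1 iR1; case/splitPr: jR1 => L2 L3 uR1 iR1.
have := uR1; rewrite cat_uniq /= => /and3P [_ /norP [jL2 _] _].
exists L1, L2, L3; split => //.
rewrite index_cat (negbTE jL2) /= eqxx addn0; lia.
Qed.

Section Forms.
Variables (R : comNzRingType) (V : lmodType R).
Implicit Types (f W : fn V) (s t : seq V).

Lemma set_nth_cat_cons s t (w u : V) :
  set_nth 0 (s ++ w :: t) (size s) u = s ++ u :: t.
Proof. by elim: s => //= x s ->. Qed.

Lemma multilinear_cat f s t a (u v : V) : multilinear f ->
  f (s ++ (a *: u + v) :: t) = a * f (s ++ u :: t) + f (s ++ v :: t).
Proof.
move=> fM; have := fM (s ++ 0 :: t) (size s) a u v.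
by rewrite size_cat /= addnS ltnS leq_addr !set_nth_cat_cons => ->.
Qed.

Lemma multilinear_catD f s t (u v : V) : multilinear f ->
  f (s ++ (u + v) :: t) = f (s ++ u :: t) + f (s ++ v :: t).
Proof. by move=> fM; have := multilinear_cat s t 1 u v fM; rewrite scale1r mul1r. Qed.

Lemma alternating_swap f s t (x y : V) : multilinear f -> alternating f ->
  f (s ++ x :: y :: t) = - f (s ++ y :: x :: t).
Proof.
move=> fM fA.
have f0 u : f (s ++ u :: u :: t) = 0.
  apply: (fA _ (size s) (size s).+1) => //; first by rewrite size_cat /=; lia.
  by rewrite !nth_cat ltnn subnn ltnNge leqnSn /= subSnn.
have fD2 u v w : f (s ++ u :: (v + w) :: t) = f (s ++ u :: v :: t) + f (s ++ u :: w :: t).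
  by rewrite -!(cat_rcons u s) multilinear_catD.
have := f0 (x + y); rewrite multilinear_catD // !fD2 !f0 add0r addr0 => /eqP.
by rewrite addr_eq0 => /eqP.
Qed.

Lemma alternating_move f s1 s2 s3 (x : V) : multilinear f -> alternating f ->
  f (s1 ++ x :: s2 ++ s3) = (-1) ^+ size s2 * f (s1 ++ s2 ++ x :: s3).
Proof.
move=> fM fA; elim: s2 s1 => [|y s2 IH] s1 /=; first by rewrite mul1r.
by rewrite alternating_swap // -cat_rcons IH cat_rcons exprS mulN1r mulNr.
Qed.

Lemma alternating_map_eq0 f (I : eqType) (E : I -> V) (L : seq I) i j :
  alternating f -> uniq L -> i \in L -> j \in L -> i != j -> E i = E j ->
  f (map E L) = 0.
Proof.
move=> fA uL iL jL ij Eij.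
wlog lt_ij : i j iL jL ij Eij / (index i L < index j L)%N.
  move=> H; case: (ltngtP (index i L) (index j L)) => h.
  - exact: (H i j).
  - by apply: (H j i) => //; rewrite eq_sym.
  - by move: ij; rewrite (index_inj i iL jL h) eqxx.
apply: (fA _ (index i L) (index j L)) => //; first by rewrite size_map index_mem.
by rewrite !(nth_map i) ?index_mem // !nth_index.
Qed.

Lemma form1_linear W a (u v : V) : is_form 1 W ->
  W [:: a *: u + v] = a * W [:: u] + W [:: v].
Proof. by case=> _ WM _; have := WM [:: 0] 0%N a u v isT. Qed.

Lemma form1_0 W : is_form 1 W -> W [:: 0] = 0.
Proof.
move=> W1; have := form1_linear 1 0 0 W1; rewrite scale1r addr0 mul1r => /esym/eqP.
by rewrite -subr_eq0 addrK => /eqP.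
Qed.

Lemma form1D W (u v : V) : is_form 1 W -> W [:: u + v] = W [:: u] + W [:: v].
Proof. by move=> W1; have := form1_linear 1 u v W1; rewrite scale1r mul1r. Qed.

Lemma form1Z W a (u : V) : is_form 1 W -> W [:: a *: u] = a * W [:: u].
Proof. by move=> W1; have := form1_linear a u 0 W1; rewrite !addr0 form1_0 ?addr0. Qed.

Lemma dual_separates_eq (x y : V) : dual_separates V ->
  (forall W, is_form 1 W -> W [:: x] = W [:: y]) -> x = y.
Proof.
move=> sep xy; apply/eqP; rewrite -subr_eq0; apply/eqP; apply: sep => W W1.
by rewrite -scaleN1r addrC form1_linear // (xy W W1) mulN1r addNr.
Qed.

Lemma const0_form (c : R) : is_form 0 (@const0 R V c).
Proof.
split.
- by case.
- by move=> [|x s] [|i] a u v //= _; rewrite mulr0 addr0.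
- by move=> [|x s] i j.
Qed.

Lemma map_enum_const n (p : pred 'I_n) (x : bool) : p =1 (fun=> x) ->
  [seq p i | i <- enum 'I_n] = nseq n x.
Proof.
move=> px; rewrite (eq_map px) -[in RHS](size_enum_ord n).
by elim: (enum 'I_n) => //= i e ->.
Qed.

Lemma const0_mask n (p : pred 'I_n) (c : R) s k : size s = n -> p k ->
  const0 c (mask [seq p i | i <- enum 'I_n] s) = 0.
Proof.
move=> sz pk; suff : mask [seq p i | i <- enum 'I_n] s != [::] by case: (mask _ s).
rewrite -size_eq0 size_mask; last by rewrite size_map size_enum_ord.
rewrite -lt0n -has_count.
by apply/hasP; exists true => //; apply/mapP; exists k; rewrite ?mem_enum.
Qed.

Lemma wedge_const0r f (c : R) s : wedge f (const0 c) s = f s * c.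
Proof.
rewrite /wedge (bigD1 setT) //= big1 ?addr0; last first.
  move=> S SnT; have [k kS] : exists k, k \notin S.
    apply/existsP; apply: contraR SnT => /existsPn Sk; apply/eqP/setP => k.
    by rewrite inE; apply/negPn.
  by rewrite (const0_mask (p := fun i => i \notin S) _ _ kS) ?mulr0.
rewrite (@map_enum_const _ (fun i => i \in setT) true); last by move=> i; rewrite inE.
rewrite (@map_enum_const _ (fun i => i \notin setT) false); last by move=> i; rewrite inE.
rewrite mask_true // mask_false /shuffle_sign (_ : #|_| = 0%N) ?mul1r //.
by apply: eq_card0 => ij; rewrite !inE andbF.
Qed.

Lemma wedge_const0l f (c : R) s : wedge (const0 c) f s = c * f s.
Proof.
rewrite /wedge (bigD1 set0) //= big1 ?addr0; last first.
  move=> S Sn0; have [k kS] : exists k, k \in S by apply/set0Pn.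
  by rewrite (const0_mask (p := fun i => i \in S) _ _ kS) ?mulr0 ?mul0r.
rewrite (@map_enum_const _ (fun i => i \in set0) false); last by move=> i; rewrite inE.
rewrite (@map_enum_const _ (fun i => i \notin set0) true); last by move=> i; rewrite inE.
rewrite mask_true // mask_false /shuffle_sign (_ : #|_| = 0%N) ?mul1r //.
by apply: eq_card0 => ij; rewrite !inE.
Qed.
End Forms.

Section Tuples.
Variables (R : comNzRingType) (V : lmodType R) (b : nat).
Implicit Types (E : 'I_b -> V) (i j k : 'I_b).

Lemma upd_eq E i z : upd E i z i = z.
Proof. by rewrite /upd eqxx. Qed.

Lemma upd_neq E i k z : k != i -> upd E i z k = E k.
Proof. by rewrite /upd => /negbTE ->. Qed.

Lemma upd_comm E i j u v : i != j -> upd (upd E i u) j v = upd (upd E j v) i u.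
Proof.
move=> ij; apply: functional_extensionality => k; rewrite /upd.
by case: (eqVneq k j) => [->|//]; rewrite eq_sym (negbTE ij).
Qed.

Lemma upd_map_notin E i (L : seq 'I_b) z : i \notin L -> map (upd E i z) L = map E L.
Proof.
by move=> iL; apply/eq_in_map => k kL; rewrite upd_neq //; apply: contraNneq iL => <-.
Qed.

Lemma upd_map_split E i (L : seq 'I_b) : uniq L -> i \in L ->
  exists s1 s2, forall z, map (upd E i z) L = s1 ++ z :: s2.
Proof.
move=> + iL; case/splitPr: iL => L1 L2.
rewrite cat_uniq /= => /and3P [_ /norP [iL1 _] /andP [iL2 _]].
by exists (map E L1), (map E L2) => z; rewrite map_cat /= !upd_map_notin // upd_eq.
Qed.

Lemma tup_del_upd E i z : tup_del (upd E i z) i = tup_del E i.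
Proof. by rewrite /tup_del upd_map_notin // mem_filter eqxx. Qed.

Lemma filter_neq_cat i (L1 L2 : seq 'I_b) : i \notin L1 -> i \notin L2 ->
  [seq k <- L1 ++ i :: L2 | k != i] = L1 ++ L2.
Proof.
have keep L : i \notin L -> [seq k <- L | k != i] = L.
  by move=> iL; apply/all_filterP/allP => k kL; apply: contraNneq iL => <-.
by move=> iL1 iL2; rewrite filter_cat /= eqxx !keep.
Qed.

Lemma tup_del_move E i j : (i < j)%N -> E i = E j ->
  exists s1 s2 s3, [/\ tup_del E i = s1 ++ s2 ++ E i :: s3,
                       tup_del E j = s1 ++ E i :: s2 ++ s3 & size s2 = (j - i.+1)%N].
Proof.
move=> lt_ij Eij.
have lt_index : (index i (enum 'I_b) < index j (enum 'I_b))%N by rewrite !index_enum_ord.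
have [L1 [L2 [L3 [eL szL2]]]] :=
  uniq_split2 (enum_uniq 'I_b) (mem_enum _ i) (mem_enum _ j) lt_index.
rewrite !index_enum_ord in szL2.
have := enum_uniq 'I_b; rewrite eL cat_uniq /= cat_uniq /= has_cat /=.
rewrite mem_cat inE !negb_or.
case/and5P=> _ /and4P [iL1 _ jL1 _] /and3P [iL2 ij iL3] _ /and3P [/andP [jL2 _] jL3 _].
exists (map E L1), (map E L2), (map E L3); split; last by rewrite size_map.
  by rewrite /tup_del eL filter_neq_cat ?map_cat //= ?Eij // mem_cat inE !negb_or iL2 ij.
rewrite /tup_del eL -cat_cons catA filter_neq_cat -?catA ?map_cat //.
by rewrite mem_cat inE !negb_or jL1 eq_sym ij jL2.
Qed.
End Tuples.

Section IterLinear.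
Variables (R : comNzRingType) (V : lmodType R) (P : {linear V -> V}) (n : nat).

Lemma iter_linearP a (x y : V) : iter n P (a *: x + y) = a *: iter n P x + iter n P y.
Proof. by elim: n => //= m ->; rewrite linearP. Qed.

Lemma iter_linear0 : iter n P 0 = 0.
Proof. by elim: n => //= m ->; rewrite linear0. Qed.

Lemma iter_linearD (x y : V) : iter n P (x + y) = iter n P x + iter n P y.
Proof. by rewrite -[x]scale1r iter_linearP !scale1r. Qed.

Lemma iter_linearZ a (x : V) : iter n P (a *: x) = a *: iter n P x.
Proof. by rewrite -[a *: x]addr0 iter_linearP iter_linear0 addr0. Qed.

Lemma iter_linearN (x : V) : iter n P (- x) = - iter n P x.
Proof. by rewrite -scaleN1r iter_linearZ scaleN1r. Qed.
End IterLinear.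

Section LeibnizDefect.
Variables (R : comNzRingType) (V : lmodType R) (b : nat) (P : {linear V -> V}).
Variables (B : ('I_b -> V) -> V) (delta : 'I_b -> R -> ('I_b -> V) -> R).
Hypothesis B_alt : valternating B.
Hypothesis B_leibniz : forall E i a u v,
  B (upd E i (a *: u + v)) = a *: B (upd E i u) + B (upd E i v) + delta i a E *: u.
Hypothesis delta_upd : forall E i a z, delta i a (upd E i z) = delta i a E.

Lemma leibniz_additive E i u v : B (upd E i (u + v)) = B (upd E i u) + B (upd E i v).
Proof.
have B0 : B (upd E i 0) = 0.
  have := B_leibniz E i 1 0 0; rewrite !scale1r !addr0 scaler0 addr0 => /esym/eqP.
  by rewrite -subr_eq0 addrK => /eqP.
have delta1 : delta i 1 E *: u = 0.
  have := B_leibniz E i 1 u 0; rewrite !scale1r !addr0 B0 addr0 => /esym/eqP.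
  by rewrite addrC -subr_eq0 addrK => /eqP.
by have := B_leibniz E i 1 u v; rewrite !scale1r delta1 addr0.
Qed.

Lemma leibniz_tperm E i j : i != j -> B (E \o tperm i j) = - B E.
Proof.
move=> ij; pose g u v := B (upd (upd E i u) j v).
have gDr u v w : g u (v + w) = g u v + g u w by rewrite /g leibniz_additive.
have gDl u u' v : g (u + u') v = g u v + g u' v.
  by rewrite /g !(upd_comm _ _ _ ij) leibniz_additive.
have gg u : g u u = 0.
  by rewrite /g; apply: (B_alt ij); rewrite upd_neq // !upd_eq.
have gE : g (E i) (E j) = B E.
  congr B; apply: functional_extensionality => k; rewrite /upd.
  by case: (eqVneq k j) => [->|_] //; case: (eqVneq k i) => [->|].
have gEt : g (E j) (E i) = B (E \o tperm i j).
  congr B; apply: functional_extensionality => k; rewrite /upd /=.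
  by case: tpermP => [->|->|/eqP/negbTE -> /eqP/negbTE ->]; rewrite ?eqxx ?(negbTE ij).
have := gg (E i + E j); rewrite gDl !gDr !gg add0r addr0 gE gEt => /eqP.
by rewrite addr_eq0 => /eqP ->; rewrite opprK.
Qed.

Definition twist (S : {set 'I_b}) (E : 'I_b -> V) k := if k \in S then P (E k) else E k.

Definition Phi_term (S : {set 'I_b}) E :=
  (-1) ^+ (b - #|S|) *: iter (b - #|S|) P (B (twist S E)).

Lemma PhiE E : Phi P B E = \sum_S Phi_term S E.
Proof. by []. Qed.

Lemma twist_upd (S : {set 'I_b}) E i z :
  twist S (upd E i z) = upd (twist S E) i (if i \in S then P z else z).
Proof.
by apply: functional_extensionality => k; rewrite /twist /upd; case: eqVneq => [->|].
Qed.

Lemma twist_setU1 (S : {set 'I_b}) E i : twist (i |: S) E = upd (twist S E) i (P (E i)).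
Proof.
apply: functional_extensionality => k; rewrite /twist /upd in_setU1.
by case: eqVneq => [->|].
Qed.

Lemma twist_tperm (S : {set 'I_b}) E i j : E i = E j ->
  twist (tperm i j @^-1: S) E = twist S E \o tperm i j.
Proof.
move=> Eij; apply: functional_extensionality => k; rewrite /twist inE /=.
by case: tpermP => [->|->|//]; rewrite Eij.
Qed.

Lemma Phi_valternating : valternating (Phi P B).
Proof.
move=> E i j ij Eij; rewrite PhiE.
apply: (sumr_involution_eq0 (p := fun S : {set 'I_b} => (i \in S) && (j \notin S))
                            (sigma := fun S => tperm i j @^-1: S)). 
- by move=> S; apply/setP => k; rewrite !inE tpermK.
- move=> S /andP [iS jS]; rewrite !inE tpermL tpermR iS (negbTE jS); split=> //.
  rewrite /Phi_term card_preimset; last exact: perm_inj.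
  by rewrite twist_tperm // leibniz_tperm // iter_linearN scalerN.
- move=> S; rewrite !inE tpermL tpermR => nS nS'.
  have eS : (i \in S) = (j \in S) by move: nS nS'; case: (i \in S); case: (j \in S).
  by rewrite /Phi_term (B_alt ij) ?iter_linear0 ?scaler0 // /twist eS Eij.
Qed.

Lemma Phi_vmultilinear : vmultilinear (Phi P B).
Proof.
move=> E i a u v; rewrite !PhiE.
pose Pi (S : {set 'I_b}) x := if i \in S then P x else x.
pose defect (S : {set 'I_b}) :=
  (-1) ^+ (b - #|S|) *: (delta i a (twist S E) *: iter (b - #|S|) P (Pi S u)).
have term_split (S : {set 'I_b}) : Phi_term S (upd E i (a *: u + v))
    = a *: Phi_term S (upd E i u) + Phi_term S (upd E i v) + defect S.
  have PiP : Pi S (a *: u + v) = a *: Pi S u + Pi S v.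
    by rewrite /Pi; case: ifP; rewrite ?linearP.
  rewrite /Phi_term !twist_upd -!/(Pi S _) PiP B_leibniz !iter_linearD !iter_linearZ !scalerDr.
  by rewrite /defect !scalerA (mulrC a).
rewrite (eq_bigr _ (fun S _ => term_split S)) !big_split /= -scaler_sumr.
suff -> : \sum_S defect S = 0 by rewrite addr0.
pose toggle (S : {set 'I_b}) := if i \in S then S :\ i else i |: S.
apply: (sumr_involution_eq0 (p := fun S : {set 'I_b} => i \notin S) (sigma := toggle)).
- move=> S; rewrite /toggle; case: (boolP (i \in S)) => iS.
    by rewrite !inE eqxx /= setD1K.
  by rewrite setU11 setU1K.
- move=> S iS; rewrite /toggle (negbTE iS) setU11; split=> //.
  have cS : #|i |: S| = #|S|.+1 by rewrite cardsU1 iS.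
  have lt_Sb : (#|S| < b)%N by have := max_card (i |: S); rewrite card_ord cS.
  rewrite /defect /Pi setU11 (negbTE iS) cS twist_setU1 delta_upd.
  rewrite (_ : (b - #|S| = (b - #|S|.+1).+1)%N); last by lia.
  by rewrite iterSr exprS mulN1r scaleNr opprK.
- by move=> S; rewrite /toggle; case: ifP => iS; rewrite !inE ?eqxx ?iS.
Qed.
End LeibnizDefect.

Section VectorField.
Variables (R : comNzRingType) (V : lmodType R) (b : nat) (D : fn V -> fn V).
Hypothesis HX : is_vector_field b D.

Lemma aXD (p q : R) s : aX D (p + q) s = aX D p s + aX D q s.
Proof.
rewrite /aX; have -> : @const0 R V (p + q) = fun t => const0 p t + const0 q t.
  by apply: functional_extensionality => -[|x t] //=; rewrite addr0.
by case: HX => _ DD _; apply: (DD 0%N); apply: const0_form.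
Qed.

Lemma aXM (p q : R) s : aX D (p * q) s = aX D p s * q + p * aX D q s.
Proof.
rewrite /aX; have -> : @const0 R V (p * q) = wedge (const0 p) (const0 q).
  apply: functional_extensionality => t; rewrite wedge_const0r.
  by case: t => //= *; rewrite mul0r.
case: HX => _ _ DM; rewrite (DM 0%N 0%N) ?muln0 ?mul1r ?wedge_const0r ?wedge_const0l //;
  exact: const0_form.
Qed.

Lemma aX_form (c : R) : is_form (b%:Z - 1) (aX D c).
Proof. by case: HX => Dform _ _; have := Dform 0%N _ (const0_form V c); rewrite add0r. Qed.

Lemma dX_form W : is_form 1 W -> is_form b (dX D W).
Proof. by case: HX => Dform _ _ /(Dform 1%N); rewrite addrC subrK. Qed.

(* From a_X (a f) = (a_X a) f + a (a_X f) in the formula defining B_X;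
   positions are 0-based. *)
Definition leibniz_defect (i : 'I_b) (a : R) (E : 'I_b -> V) : R :=
  (-1) ^+ i.+1 * aX D a (tup_del E i).

Lemma leibniz_defect_upd E i a z : leibniz_defect i a (upd E i z) = leibniz_defect i a E.
Proof. by rewrite /leibniz_defect tup_del_upd. Qed.

Lemma sign_shift (i : nat) : (i < b)%N ->
  (-1) ^+ b.+1 * (-1) ^+ (b - i.+1) = (-1) ^+ i :> R.
Proof.
move=> lt_ib; rewrite -exprD (_ : (b.+1 + (b - i.+1) = i + (b - i) * 2)%N); last by lia.
by rewrite exprD exprM sqrr_sign mulr1.
Qed.

Variables (B : ('I_b -> V) -> V).
Hypotheses (Hsep : dual_separates V) (HB : is_BX D B).

Lemma BX_leibniz E i a x y :
  B (upd E i (a *: x + y)) = a *: B (upd E i x) + B (upd E i y) + leibniz_defect i a E *: x.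
Proof.
apply: dual_separates_eq => // W W1; rewrite !form1D // !form1Z // !HB //.
have [_ dXM _] := dX_form W1.
have [s1 [s2 enumE]] := upd_map_split E (enum_uniq 'I_b) (mem_enum _ i).
rewrite /dX /tup !enumE multilinear_cat //.
set C := (-1) ^+ (b - i.+1) * aX D a (tup_del E i) * W [:: x].
have term_split (k : 'I_b) :
  (-1) ^+ (b - k.+1) * aX D (W [:: upd E i (a *: x + y) k]) (tup_del (upd E i (a *: x + y)) k)
  = a * ((-1) ^+ (b - k.+1) * aX D (W [:: upd E i x k]) (tup_del (upd E i x) k))
    + (-1) ^+ (b - k.+1) * aX D (W [:: upd E i y k]) (tup_del (upd E i y) k)
    + (if k == i then C else 0).
  case: (eqVneq k i) => [->|ki].
    by rewrite !upd_eq !tup_del_upd form1_linear // aXD aXM /C; ring.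
  have [_ aXml _] := aX_form (W [:: E k]).
  have iL : i \in [seq j <- enum 'I_b | j != k] by rewrite mem_filter eq_sym ki mem_enum.
  have [t1 [t2 delE]] := upd_map_split E (filter_uniq (fun j => j != k) (enum_uniq 'I_b)) iL.
  by rewrite !upd_neq // /tup_del !delE multilinear_cat //; ring.
rewrite (eq_bigr _ (fun k _ => term_split k)) !big_split /= -mulr_sumr -big_mkcond.
rewrite big_pred1_eq /C /leibniz_defect [(-1) ^+ i.+1]exprS -(sign_shift (ltn_ord i)); ring.
Qed.

Lemma BX_alternating : valternating B.
Proof.
suff BX0 (E : 'I_b -> V) (i j : 'I_b) : (i < j)%N -> E i = E j -> B E = 0.
  move=> E i j ij Eij; case: (ltngtP i j) => [lt_ij|lt_ji|/val_inj eq_ij].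
  - exact: BX0 E i j lt_ij Eij.
  - exact: BX0 E j i lt_ji (esym Eij).
  - by rewrite eq_ij eqxx in ij.
move=> lt_ij Eij; have ij : i != j by rewrite neq_ltn lt_ij.
apply: dual_separates_eq => // W W1; rewrite form1_0 // HB //.
have [_ _ dXA] := dX_form W1.
rewrite /tup (alternating_map_eq0 dXA (enum_uniq 'I_b) (mem_enum 'I_b i)
  (mem_enum 'I_b j) ij Eij).
rewrite (bigD1 i) //= (bigD1 j) 1?eq_sym //= big1 => [|k /andP [ki kj]]; last first.
  have [_ _ aXalt] := aX_form (W [:: E k]).
  rewrite (alternating_map_eq0 aXalt (filter_uniq _ (enum_uniq 'I_b)) _ _ ij Eij) ?mulr0 //;
    by rewrite mem_filter mem_enum andbT eq_sym.
(* The terms k = i and k = j cancel: the two deletions differ by moving E i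
   across j - i - 1 slots. *)
have [s1 [s2 [s3 [delEi delEj sz2]]]] := tup_del_move lt_ij Eij.
have [_ aXml aXalt] := aX_form (W [:: E i]).
rewrite -Eij delEj alternating_move // sz2 -delEi.
have sg : (-1) ^+ (b - i.+1) = - ((-1) ^+ (b - j.+1) * (-1) ^+ (j - i.+1)) :> R.
  rewrite -exprD (_ : (b - i.+1 = (b - j.+1 + (j - i.+1)).+1)%N) ?exprS ?mulN1r //.
  by have := ltn_ord j; lia.
by rewrite sg; ring.
Qed.
End VectorField.

Theorem proposition14p4 (R : comNzRingType) (V : lmodType R)
  (Hsep : dual_separates V)
  (P : {linear V -> V}) (b : nat) (D : fn V -> fn V)
  (HX : is_vector_field b D)
  (B : ('I_b -> V) -> V) (HB : is_BX D B) :
  valternating (Phi P B) /\ vmultilinear (Phi P B).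
Proof.
have B_leibniz := BX_leibniz HX Hsep HB.
have B_alt := BX_alternating HX Hsep HB.
split; first exact: Phi_valternating B_alt B_leibniz.
exact: Phi_vmultilinear B_leibniz (@leibniz_defect_upd R V b D).
Qed.
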